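(* For every positive integer $n$, the Wiener indices of the spiro ortho-chain $O_n$, the spiro meta-chain $M_n$ and the spiro para-chain $P_n$ are $$W(O_n)=\frac{25}{6}n^3+\frac{65}{2}n^2-\frac{29}{3}n,\quad W(M_n)=\frac{25}{3}n^3+20n^2-\frac{4}{3}n,\quad W(P_n)=\frac{25}{2}n^3+\frac{15}{2}n^2+7n.$$
   Context: The Wiener index is $W(G)=\sum_{\{u,v\}\subseteq V(G)}d_G(u,v)$, $d_G$ the shortest-path distance. A spiro hexagonal chain of length $n$, $G_n=H_0H_1\cdots H_{n-1}$, is a connected graph in which every block is a hexagon (6-cycle) $H_0,\dots,H_{n-1}$, each hexagon has at most two cut-vertices, each cut-vertex is shared by exactly two hexagons, and for $k=1,\dots,n-1$ the hexagons $H_{k-1}$ and $H_k$ share the cut-vertex $c_k$. For $k\ge1$, a vertex of $H_k$ at distance $1$, $2$, $3$ from $c_k$ is called an ortho-, meta-, para-vertex of $H_k$, denoted $o_k,m_k,p_k$. The spiro ortho-chain $O_n$ is the spiro hexagonal chain with $c_k=o_{k-1}$ for all $2\le k\le n-1$; the spiro meta-chain $M_n$ has $c_k=m_{k-1}$ and the spiro para-chain $P_n$ has $c_k=p_{k-1}$ for all $2\le k\le n-1$ (for $n\le2$ these conditions are vacuous). *)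

From mathcomp Require Import all_boot all_order all_algebra.
Set Implicit Arguments. Unset Strict Implicit. Unset Printing Implicit Defensive.

Definition walk_of_len (T : finType) (e : rel T) (m : nat) (u v : T) : bool :=
  [exists p : m.-tuple T, path e u p && (last u p == v)].

(* Shortest-path distance: the least m with a walk of length m from u to v
   (a shortest walk is a path, so it has length < #|T|); for connected graphs
   this is exactly d_G(u,v). *)
Definition gdist (T : finType) (e : rel T) (u v : T) : nat :=
  find (fun m => walk_of_len e m u v) (iota 0 #|T|).

Definition wiener (N : nat) (e : rel 'I_N) : nat :=
  \sum_(u : 'I_N) \sum_(v : 'I_N | (u < v)%N) gdist e u v.

(** Vertices are 0 .. 5n.  Hexagon H_0 has vertices 0,1,...,5 in cyclic order.
  For k >= 1, hexagon H_k has, in cyclic order, the vertices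
     c_k, 5k+1, 5k+2, 5k+3, 5k+4, 5k+5,
  i.e. position p (0 <= p <= 5) of H_k is the vertex at cyclic position p
  counting from the cut vertex c_k (position 0).  The cut vertex c_1 is the
  vertex 0 of H_0 (no loss of generality: H_0 has no other constraint), and
  for k >= 1 the cut vertex c_(k+1) is the vertex at position  s k  of H_k,
  where s k is in {1,...,5}.  Every spiro hexagonal chain of length n is
  isomorphic to one of these graphs for some choice of s. *)

Definition cutv (s : nat -> nat) (k : nat) : nat :=
  if k == 1 then 0 else 5 * k.-1 + s k.-1.

Definition hexv (s : nat -> nat) (k p : nat) : nat :=
  if k == 0 then p else if p == 0 then cutv s k else 5 * k + p.

Definition spiro_adj (n : nat) (s : nat -> nat) : rel 'I_(5 * n + 1) :=
  fun u v =>
    [exists k : 'I_n, exists p : 'I_6,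
      ((hexv s k p == u) && (hexv s k (p.+1 %% 6) == v))
      || ((hexv s k p == v) && (hexv s k (p.+1 %% 6) == u))].

(* s describes a legal spiro chain of length n: c_(k+1) != c_k. *)
Definition spiro_choice (n : nat) (s : nat -> nat) : Prop :=
  forall k, (1 <= k)%N -> (k.+2 <= n)%N -> (1 <= s k <= 5)%N.

(* Distance (along H_k) of position s k from c_k is 1 / 2 / 3:
   c_(k+1) = o_k, m_k, p_k respectively, for 1 <= k <= n-2. *)
Definition ortho_choice (n : nat) (s : nat -> nat) : Prop :=
  forall k, (1 <= k)%N -> (k.+2 <= n)%N -> s k = 1%N \/ s k = 5%N.
Definition meta_choice (n : nat) (s : nat -> nat) : Prop :=
  forall k, (1 <= k)%N -> (k.+2 <= n)%N -> s k = 2%N \/ s k = 4%N.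
Definition para_choice (n : nat) (s : nat -> nat) : Prop :=
  forall k, (1 <= k)%N -> (k.+2 <= n)%N -> s k = 3%N.

Arguments spiro_adj : clear implicits.

From mathcomp Require Import all_boot all_order all_algebra.
From mathcomp Require Import zify ring.
Import GRing.Theory.
Set Implicit Arguments. Unset Strict Implicit. Unset Printing Implicit Defensive.

(* Shortest paths between hexagons of a spiro chain run through cut vertices, so the
   distance from the vertex at position p of H_k to a vertex y is the hexagon distance from
   p to a "gate" position of H_k plus a distance accumulated along the chain of cut
   vertices.  This function vanishes only on the diagonal, is 1-Lipschitz along edges and
   can always be decreased along some edge, hence it is the graph distance.  Appending
   H_n to G_n adds five vertices whose distances to G_n all pass through c_n, whence
     W(G_(n+1)) = W(G_n) + 5 T_n + 45 n + 27,   T_(n+1) = T_n + 5 n h_n + 9,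
   with T_n the transmission of c_n in G_n and h_n = d(c_n, c_(n+1)).  Solving,
   W(G_n) = 27 n + 90 C(n,2) + 25 sum_(k < j < n) k h_k, and the ortho-, meta- and
   para-chains have h_k = 1, 2, 3 on all inner hexagons, so the sum is h C(n,3). *)

Section GraphDistance.

Variables (T : finType) (e : rel T) (d : T -> T -> nat).
Hypothesis d_eq0 : forall x y, (d x y == 0) = (x == y).
Hypothesis d_lipschitz : forall u w y, e u w -> d u y <= d w y + 1.
Hypothesis d_descent : forall u y, 0 < d u y -> exists2 w, e u w & d w y = (d u y).-1.
Hypothesis d_lt_card : forall u y, d u y < #|T|.

Lemma walk_of_len_ge m u v : walk_of_len e m u v -> d u v <= m.
Proof.
case/existsP=> p /andP[walk_p /eqP last_p]; rewrite -(size_tuple p) -last_p.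
elim: (tval p) u walk_p {last_p} => [|w q IH] x /=.
  by move=> _; rewrite leqn0 d_eq0.
case/andP=> exw walk_q; have := d_lipschitz (last w q) exw; have := IH w walk_q; lia.
Qed.

Lemma walk_of_len_dist m u v : d u v = m -> walk_of_len e m u v.
Proof.
elim: m u => [|m IH] u duv.
  by apply/existsP; exists [tuple]; rewrite /= -d_eq0 duv.
have [|w euw dwv] := @d_descent u v; first by rewrite duv.
have /existsP[p /andP[walk_p last_p]] := IH w (etrans dwv (congr1 _ duv)).
by apply/existsP; exists [tuple of w :: p]; rewrite /= euw walk_p.
Qed.

Lemma gdist_eq u v : gdist e u v = d u v.
Proof.
rewrite /gdist -(subnKC (ltnW (d_lt_card u v))) iotaD find_cat size_iota add0n.
have -> : has (fun m => walk_of_len e m u v) (iota 0 (d u v)) = false.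
  apply/hasPn => m; rewrite mem_iota add0n => /andP[_ lt_m].
  by apply/negP => /walk_of_len_ge; rewrite leqNgt lt_m.
have : 0 < #|T| - d u v by rewrite subn_gt0.
case: (#|T| - d u v) => [|k] // _.
by rewrite /= walk_of_len_dist ?addn0.
Qed.

End GraphDistance.

Lemma bin_sum n m : \sum_(0 <= j < n) 'C(j, m) = 'C(n, m.+1).
Proof.
elim: n => [|n IH]; first by rewrite big_geq.
by rewrite big_nat_recr //= IH binS.
Qed.

Definition hexdist (p q : nat) : nat :=
  let d := (6 + p - q) %% 6 in minn d (6 - d).

Lemma hexdist_sym p q : p < 6 -> q < 6 -> hexdist p q = hexdist q p.
Proof. by case: p => [|[|[|[|[|[|]]]]]] //; case: q => [|[|[|[|[|[|]]]]]]. Qed.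

Lemma hexdistpp p : hexdist p p = 0.
Proof. by rewrite /hexdist addnK modnn. Qed.

Lemma hexdist_le3 p q : hexdist p q <= 3.
Proof. rewrite /hexdist; lia. Qed.

Lemma hexdist_eq0 p q : p < 6 -> q < 6 -> (hexdist p q == 0) = (p == q).
Proof. by case: p => [|[|[|[|[|[|]]]]]] //; case: q => [|[|[|[|[|[|]]]]]]. Qed.

Lemma hexdist_succ_le p t : p < 6 -> t < 6 ->
  hexdist p t <= hexdist (p.+1 %% 6) t + 1 /\ hexdist (p.+1 %% 6) t <= hexdist p t + 1.
Proof. by case: p => [|[|[|[|[|[|]]]]]] //; case: t => [|[|[|[|[|[|]]]]]]. Qed.

Lemma hexdist_step_down p t : p < 6 -> t < 6 -> 0 < hexdist p t ->
  hexdist (p.+1 %% 6) t = (hexdist p t).-1 \/ hexdist ((p + 5) %% 6) t = (hexdist p t).-1.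
Proof.
case: p => [|[|[|[|[|[|]]]]]] //; case: t => [|[|[|[|[|[|]]]]]] //= *;
  by [left | right].
Qed.

Lemma succ_hexpred p : p < 6 -> ((p + 5) %% 6).+1 %% 6 = p.
Proof. by case: p => [|[|[|[|[|[|]]]]]]. Qed.

Lemma sum_hexdist c : c < 6 -> \sum_(0 <= q < 6) hexdist q c = 9.
Proof. by rewrite unlock; case: c => [|[|[|[|[|[|]]]]]]. Qed.

(* Vertex 5k + p (1 <= p <= 5) has position p in H_k and vertex 0 position 0 in H_0;
   a cut vertex c_(k+1) is thus located in H_k, at position [cutpos s k]. *)
Definition hidx (x : nat) : nat := x.-1 %/ 5.
Definition hpos (x : nat) : nat := if x == 0 then 0 else x.-1 %% 5 + 1.

Lemma hpos_lt6 x : hpos x < 6.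
Proof. rewrite /hpos; case: eqP => _; lia. Qed.

Lemma hexcoordE x : x = 5 * hidx x + hpos x.
Proof. rewrite /hidx /hpos; case: eqP => [->|] //; lia. Qed.

Lemma hpos_eq0 x : (hpos x == 0) = (x == 0).
Proof. by rewrite /hpos addn1; case: (x == 0). Qed.

Lemma hexcoord_addn k p : 0 < p <= 5 -> hidx (p + 5 * k) = k /\ hpos (p + 5 * k) = p.
Proof. rewrite /hidx /hpos; case: eqP; lia. Qed.

(* [%% 6] only keeps [cutpos] in range for unconstrained [s]; [gap s k] is d(c_k, c_(k+1)),
   and [gap s 0 = 0]. *)
Definition cutpos (s : nat -> nat) (k : nat) : nat := if k == 0 then 0 else s k %% 6.

Definition gap (s : nat -> nat) (k : nat) : nat := hexdist 0 (cutpos s k).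

Definition cutdist (s : nat -> nat) (a b : nat) : nat := \sum_(a <= j < b) gap s j.

(* Every shortest path from a vertex of H_k to y passes through position [gate s k y]
   of H_k, from which [gate_dist s k y] remains to be covered. *)
Definition gate (s : nat -> nat) (k y : nat) : nat :=
  if k == hidx y then hpos y else if k < hidx y then cutpos s k else 0.

Definition gate_dist (s : nat -> nat) (k y : nat) : nat :=
  if k == hidx y then 0
  else if k < hidx y then cutdist s k.+1 (hidx y) + hexdist 0 (hpos y)
  else hexdist (hpos y) (cutpos s (hidx y)) + cutdist s (hidx y).+1 k.

Definition hdist (s : nat -> nat) (k p y : nat) : nat :=
  hexdist p (gate s k y) + gate_dist s k y.

Definition sdist (s : nat -> nat) (x y : nat) : nat := hdist s (hidx x) (hpos x) y.

Lemma cutpos_lt6 s k : cutpos s k < 6.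
Proof. rewrite /cutpos; case: eqP => _; lia. Qed.

Lemma gate_lt6 s k y : gate s k y < 6.
Proof. by rewrite /gate; case: ifP => _; [|case: ifP => _]; rewrite ?hpos_lt6 ?cutpos_lt6. Qed.

Lemma cutdist_ge s a b : b <= a -> cutdist s a b = 0.
Proof. by move=> le_ba; rewrite /cutdist big_geq. Qed.

Lemma cutdistS s a b : a < b -> cutdist s a b = gap s a + cutdist s a.+1 b.
Proof. by move=> lt_ab; rewrite /cutdist big_ltn. Qed.

Lemma cutdist_recr s a b : a <= b -> cutdist s a b.+1 = cutdist s a b + gap s b.
Proof. by move=> le_ab; rewrite /cutdist big_nat_recr. Qed.

Lemma cutdist_le s a b : cutdist s a b <= 3 * (b - a).
Proof.
rewrite mulnC -sum_nat_const_nat.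
by apply: leq_sum => j _; apply: hexdist_le3.
Qed.

Lemma hdist_cut s k y : hdist s k (cutpos s k) y = hdist s k.+1 0 y.
Proof.
have cut_lt6 := cutpos_lt6 s k; have y_lt6 := hpos_lt6 y.
rewrite /hdist /gate /gate_dist.
case: (ltngtP k (hidx y)) => [lt_ky|gt_ky|eq_ky];
  case: (ltngtP k.+1 (hidx y)) => [lt_Sky|gt_Sky|eq_Sky]; rewrite ?hexdistpp; try lia.
- by rewrite (cutdistS s lt_Sky) add0n addnA.
- by rewrite -eq_Sky cutdist_ge // addn0.
- by rewrite cutdist_recr // (hexdist_sym cut_lt6) // /gap; lia.
- by rewrite -eq_ky cutdist_ge // hexdist_sym.
Qed.

Lemma sdist_eq0 s x y : (sdist s x y == 0) = (x == y).
Proof.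
have x_lt6 := hpos_lt6 x; have y_lt6 := hpos_lt6 y.
apply/eqP/eqP => [|->]; last by rewrite /sdist /hdist /gate /gate_dist eqxx hexdistpp.
rewrite /sdist /hdist /gate /gate_dist; case: (ltngtP (hidx x) (hidx y)) => [lt_xy|gt_xy|eq_xy].
- move=> /eqP; rewrite addn_eq0 => /andP[_]; rewrite addn_eq0 => /andP[_].
  by rewrite hexdist_eq0 // eq_sym hpos_eq0 => /eqP y0; rewrite y0 in lt_xy.
- move=> /eqP; rewrite addn_eq0 hexdist_eq0 // hpos_eq0 => /andP[/eqP x0 _].
  by rewrite x0 in gt_xy.
- rewrite addn0 => /eqP; rewrite hexdist_eq0 // => /eqP pos_xy.
  by rewrite (hexcoordE x) (hexcoordE y) eq_xy pos_xy.
Qed.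

Lemma gate_reached s x y : 0 < sdist s x y -> hpos x = gate s (hidx x) y -> hidx x < hidx y.
Proof.
rewrite lt0n sdist_eq0 /gate; case: (ltngtP (hidx x) (hidx y)) => // [gt_xy|eq_xy] neq_xy.
- by move/eqP; rewrite hpos_eq0 => /eqP x0; rewrite x0 in gt_xy.
- by move=> pos_xy; rewrite (hexcoordE x) (hexcoordE y) eq_xy pos_xy eqxx in neq_xy.
Qed.

Lemma sdist_le s n x y : hidx x < n -> hidx y < n -> sdist s x y <= 3 * n.
Proof.
move=> xn yn; rewrite /sdist /hdist /gate /gate_dist.
have := hexdist_le3 (hpos x) (hpos y); have := hexdist_le3 (hpos x) (cutpos s (hidx x)).
have := hexdist_le3 0 (hpos y); have := hexdist_le3 (hpos y) (cutpos s (hidx y)).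
have := hexdist_le3 (hpos x) 0.
have := cutdist_le s (hidx x).+1 (hidx y); have := cutdist_le s (hidx y).+1 (hidx x).
case: ifP => ?; [|case: ifP => ?]; lia.
Qed.

Lemma hdist_succ_le s k p y : p < 6 ->
  hdist s k p y <= hdist s k (p.+1 %% 6) y + 1 /\ hdist s k (p.+1 %% 6) y <= hdist s k p y + 1.
Proof. by move=> p_lt6; rewrite /hdist; have := hexdist_succ_le p_lt6 (gate_lt6 s k y); lia. Qed.

Lemma hidx_lt n x : 0 < n -> x < 5 * n + 1 -> hidx x < n.
Proof. by rewrite /hidx; case: x => [|x] /=; lia. Qed.

Section SpiroChain.

Variables (n : nat) (s : nat -> nat).
Hypothesis s_spiro : spiro_choice n s.

Lemma cutpos_spiro k : 1 <= k -> k.+2 <= n -> cutpos s k = s k.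
Proof.
move=> k_ge1 kn; have := s_spiro k_ge1 kn.
by rewrite /cutpos; case: eqP => [|_ s_k]; [lia | rewrite modn_small //; lia].
Qed.

Lemma hexv_coord k p : p < 6 -> (k == 0) || (p != 0) ->
  hidx (hexv s k p) = k /\ hpos (hexv s k p) = p.
Proof.
rewrite /hexv; case: eqP => [-> p_lt6 _|_ p_lt6 /= p_neq0].
  by rewrite /hidx /hpos; case: p p_lt6 => [|p] //=; lia.
by rewrite (negPf p_neq0) addnC; apply: hexcoord_addn; lia.
Qed.

Lemma hexv_coordK x : hexv s (hidx x) (hpos x) = x.
Proof.
rewrite /hexv [RHS]hexcoordE; case: eqP => [->|hidx_neq0]; first by rewrite muln0.
by rewrite ifF // hpos_eq0; apply/eqP => x0; rewrite x0 in hidx_neq0.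
Qed.

Lemma hexv_cut k : k.+1 < n -> hexv s k.+1 0 = hexv s k (cutpos s k).
Proof.
rewrite /hexv /cutv /=; case: k => [|k] // kn.
rewrite cutpos_spiro //; have := s_spiro (isT : 0 < k.+1) kn.
by case: (s k.+1) => [|m].
Qed.

Lemma sdist_hexv k p y : k < n -> p < 6 -> sdist s (hexv s k p) y = hdist s k p y.
Proof.
move=> kn p_lt6; case regular: ((k == 0) || (p != 0)).
  by rewrite /sdist; have [-> ->] := hexv_coord p_lt6 regular.
case: k kn regular => // k kn /negbFE/eqP ->.
rewrite hexv_cut // -hdist_cut /sdist.
have regular : (k == 0) || (cutpos s k != 0).
  case: k kn => // k kn; rewrite cutpos_spiro //=.
  by have := s_spiro (isT : 0 < k.+1) kn; lia.
by have [-> ->] := hexv_coord (cutpos_lt6 s k) regular.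
Qed.

Lemma hexv_lt k p : k < n -> p < 6 -> hexv s k p < 5 * n + 1.
Proof.
move=> kn p_lt6; rewrite /hexv /cutv.
case: eqP => k0; first lia.
case: eqP => _; last lia.
case: eqP => k1; first lia.
have : 1 <= s k.-1 <= 5 by apply: s_spiro; lia.
lia.
Qed.

Lemma spiro_adj_hexv (u w : 'I_(5 * n + 1)) k p : k < n -> p < 6 ->
  val u = hexv s k p -> val w = hexv s k (p.+1 %% 6) ->
  spiro_adj n s u w /\ spiro_adj n s w u.
Proof.
move=> kn p_lt6 uE wE; split; apply/existsP; exists (Ordinal kn);
  apply/existsP; exists (Ordinal p_lt6); by rewrite /= -uE -wE !eqxx ?orbT.
Qed.

Lemma spiro_adjP (u w : 'I_(5 * n + 1)) : spiro_adj n s u w ->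
  exists k p, [/\ k < n, p < 6 &
   (val u = hexv s k p /\ val w = hexv s k (p.+1 %% 6)) \/
   (val w = hexv s k p /\ val u = hexv s k (p.+1 %% 6))].
Proof.
case/existsP=> k /existsP[p] /orP[] /andP[/eqP uE /eqP wE];
  exists k, p; split=> //; [left | right]; by split.
Qed.

Lemma sdist_lipschitz (u w : 'I_(5 * n + 1)) y :
  spiro_adj n s u w -> sdist s u y <= sdist s w y + 1.
Proof.
case/spiro_adjP=> k [p [kn p_lt6 [[-> ->]|[-> ->]]]];
  rewrite !sdist_hexv ?ltn_pmod //; have := hdist_succ_le s k y p_lt6; lia.
Qed.

Lemma gate_next k y : k < hidx y -> hidx y < n -> 0 < hexdist 0 (gate s k.+1 y).
Proof.
move=> lt_ky yn; rewrite lt0n hexdist_eq0 ?gate_lt6 // eq_sym /gate.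
case: (ltngtP k.+1 (hidx y)) => [lt_Sky|gt_Sky|_].
- have : 1 <= s k.+1 <= 5 by apply: s_spiro; lia.
  by rewrite cutpos_spiro //; lia.
- lia.
- by rewrite hpos_eq0; apply/eqP => y0; rewrite y0 in lt_ky.
Qed.

Lemma sdist_step_in_hex (u : 'I_(5 * n + 1)) k p y : k < n -> p < 6 ->
  val u = hexv s k p -> 0 < hexdist p (gate s k y) ->
  exists2 w, spiro_adj n s u w & sdist s w y = (sdist s u y).-1.
Proof.
move=> kn p_lt6 uE gate_far; rewrite uE sdist_hexv // /hdist.
have [closer|closer] := hexdist_step_down p_lt6 (gate_lt6 s k y) gate_far.
- pose w := Ordinal (hexv_lt kn (ltn_pmod p.+1 (isT : 0 < 6))).
  exists w; first by have [] := spiro_adj_hexv kn p_lt6 uE (erefl (val w)).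
  by rewrite /= sdist_hexv ?ltn_pmod // /hdist closer; lia.
- have pred_lt6 := ltn_pmod (p + 5) (isT : 0 < 6).
  pose w := Ordinal (hexv_lt kn pred_lt6).
  exists w; last by rewrite /= sdist_hexv // /hdist closer; lia.
  have [] // := spiro_adj_hexv (w := u) kn pred_lt6 (erefl (val w)).
  by rewrite succ_hexpred.
Qed.

Hypothesis n_gt0 : 0 < n.

Lemma sdist_descent (u : 'I_(5 * n + 1)) y : y < 5 * n + 1 ->
  0 < sdist s u y -> exists2 w, spiro_adj n s u w & sdist s w y = (sdist s u y).-1.
Proof.
move=> yn u_far; have un := hidx_lt n_gt0 (ltn_ord u).
have [at_gate|] := posnP (hexdist (hpos u) (gate s (hidx u) y)); last first.
  by apply: sdist_step_in_hex; rewrite ?hpos_lt6 ?hexv_coordK.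
move/eqP: at_gate; rewrite hexdist_eq0 ?hpos_lt6 ?gate_lt6 // => /eqP at_gate.
have lt_uy := gate_reached u_far at_gate; have y_lt := hidx_lt n_gt0 yn.
apply: (@sdist_step_in_hex _ (hidx u).+1 0) => //; [lia | | exact: gate_next].
move: at_gate; rewrite /gate ltn_eqF // lt_uy => at_cut.
by rewrite hexv_cut; [rewrite -at_cut hexv_coordK | lia].
Qed.

Lemma gdist_spiro (u v : 'I_(5 * n + 1)) : gdist (spiro_adj n s) u v = sdist s u v.
Proof.
apply: (@gdist_eq _ _ (fun a b : 'I_(5 * n + 1) => sdist s a b)) => a b.
- by rewrite sdist_eq0.
- by move=> y; apply: sdist_lipschitz.
- by apply: sdist_descent.
- rewrite card_ord; have := sdist_le s (hidx_lt n_gt0 (ltn_ord a)) (hidx_lt n_gt0 (ltn_ord b)).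
  lia.
Qed.

End SpiroChain.

(* [cut_dist s n u] is d(u, c_n), [cut_trans s n] is the transmission of c_n in G_n,
   and [dist_sum s (1 + 5 * n)] is W(G_n). *)
Definition cut_dist (s : nat -> nat) (n u : nat) : nat :=
  hexdist (hpos u) (cutpos s (hidx u)) + cutdist s (hidx u).+1 n.

Definition cut_trans (s : nat -> nat) (n : nat) : nat :=
  \sum_(0 <= u < 1 + 5 * n) cut_dist s n u.

Definition dist_sum (s : nat -> nat) (N : nat) : nat :=
  \sum_(0 <= v < N) \sum_(0 <= u < v) sdist s u v.

Lemma sum_ord_lt_pairs N (f : nat -> nat -> nat) :
  \sum_(u < N) \sum_(v < N | u < v) f u v = \sum_(0 <= v < N) \sum_(0 <= u < v) f u v.
Proof.
rewrite (eq_bigr (fun u : 'I_N => \sum_(v < N) (if u < v then f u v else 0)));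
  last by move=> u _; rewrite big_mkcond.
rewrite exchange_big /= big_mkord; apply: eq_bigr => v _.
by rewrite big_mkord (big_ord_widen N (fun u => f u v)) 1?[RHS]big_mkcond // ltnW.
Qed.

Lemma wiener_dist_sum n s : 0 < n -> spiro_choice n s ->
  wiener (spiro_adj n s) = dist_sum s (1 + 5 * n).
Proof.
move=> n_gt0 s_spiro; rewrite [1 + _]addnC /wiener /dist_sum -sum_ord_lt_pairs.
by apply: eq_bigr => u _; apply: eq_bigr => v _; rewrite (gdist_spiro s_spiro n_gt0).
Qed.

Lemma sdist_new_vertex s n u q : u < 1 + 5 * n -> 0 < q <= 5 ->
  sdist s u (q + 5 * n) = cut_dist s n u + hexdist 0 q.
Proof.
move=> un q_pos; rewrite /sdist /hdist /gate /gate_dist /cut_dist.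
have [-> ->] := hexcoord_addn n q_pos.
have [lt_un|ge_un] := ltnP (hidx u) n; first by rewrite (ltn_eqF lt_un) addnA.
have [-> ->] : u = 0 /\ n = 0 by move: un ge_un; rewrite /hidx; lia.
by rewrite cutdist_ge // hexdistpp !addn0.
Qed.

Lemma sum_sdist_new_vertex s n q : 0 < q <= 5 ->
  \sum_(0 <= u < q + 5 * n) sdist s u (q + 5 * n) =
  cut_trans s n + (1 + 5 * n) * hexdist 0 q + \sum_(1 <= p < q) hexdist p q.
Proof.
move=> q_pos; rewrite (big_cat_nat _ (n := 1 + 5 * n)) //=; last lia.
congr (_ + _).
  rewrite (eq_big_nat _ _ (F2 := fun u => cut_dist s n u + hexdist 0 q)).
    by rewrite big_split /= sum_nat_const_nat subn0.
  by move=> u /andP[_ un]; apply: sdist_new_vertex.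
rewrite big_addn addnK; apply: eq_big_nat => p /andP[p_ge1 p_lt].
rewrite /sdist /hdist /gate /gate_dist; have [-> ->] := hexcoord_addn n q_pos.
have [-> ->] : hidx (p + 5 * n) = n /\ hpos (p + 5 * n) = p by apply: hexcoord_addn; lia.
by rewrite eqxx addn0.
Qed.

Lemma sum_new_hexagon (F : nat -> nat) n :
  \sum_(0 <= v < 1 + 5 * n.+1) F v =
  \sum_(0 <= v < 1 + 5 * n) F v + \sum_(1 <= q < 6) F (q + 5 * n).
Proof.
rewrite (_ : 1 + 5 * n.+1 = 6 + 5 * n); last lia.
by rewrite (big_cat_nat _ (n := 1 + 5 * n)) //= ?big_addn ?addnK //; lia.
Qed.

Lemma dist_sum_step s n :
  dist_sum s (1 + 5 * n.+1) = dist_sum s (1 + 5 * n) + 5 * cut_trans s n + 45 * n + 27.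
Proof.
rewrite /dist_sum sum_new_hexagon -!addnA; congr (_ + _).
rewrite (eq_big_nat _ _ (F2 := fun q =>
  cut_trans s n + (1 + 5 * n) * hexdist 0 q + \sum_(1 <= p < q) hexdist p q)); last first.
  by move=> q q_range; apply: sum_sdist_new_vertex; lia.
rewrite !big_split /= sum_nat_const_nat -big_distrr /=.
have -> : \sum_(1 <= q < 6) hexdist 0 q = 9 by rewrite unlock.
have -> : \sum_(1 <= q < 6) \sum_(1 <= p < q) hexdist p q = 18 by rewrite unlock.
lia.
Qed.

Lemma cut_distS s n u : u < 1 + 5 * n -> cut_dist s n.+1 u = cut_dist s n u + gap s n.
Proof.
rewrite /cut_dist; have [lt_un|ge_un] := ltnP (hidx u) n; first by rewrite cutdist_recr // addnA.
move=> un; have [-> ->] : u = 0 /\ n = 0 by move: un ge_un; rewrite /hidx; lia.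
by rewrite !cutdist_ge.
Qed.

Lemma cut_trans_step s n : cut_trans s n.+1 = cut_trans s n + 5 * n * gap s n + 9.
Proof.
rewrite /cut_trans sum_new_hexagon.
under eq_big_nat => u /andP[_ un] do rewrite cut_distS //.
rewrite big_split /= sum_nat_const_nat subn0.
rewrite [X in _ + X](eq_big_nat _ _ (F2 := fun q => hexdist q (cutpos s n))); last first.
  move=> q q_range; rewrite /cut_dist.
  have [-> ->] : hidx (q + 5 * n) = n /\ hpos (q + 5 * n) = q by apply: hexcoord_addn; lia.
  by rewrite cutdist_ge ?addn0.
have := sum_hexdist (cutpos_lt6 s n); rewrite big_ltn // /gap; lia.
Qed.

Lemma cut_transE s n : cut_trans s n = 9 * n + 5 * \sum_(0 <= k < n) k * gap s k.
Proof.
elim: n => [|n IH]; first by rewrite big_geq // /cut_trans big_nat1 /cut_dist cutdist_ge.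
by rewrite cut_trans_step IH big_nat_recr //=; lia.
Qed.

Lemma dist_sumE s n : dist_sum s (1 + 5 * n) =
  27 * n + 90 * 'C(n, 2) + 25 * \sum_(0 <= j < n) \sum_(0 <= k < j) k * gap s k.
Proof.
elim: n => [|n IH]; first by rewrite /dist_sum big_nat1 !big_geq.
by rewrite dist_sum_step IH cut_transE big_nat_recr //= binS bin1; lia.
Qed.

Lemma sum_gap_const s n h : (forall k, 1 <= k -> k.+2 <= n -> gap s k = h) ->
  \sum_(0 <= j < n) \sum_(0 <= k < j) k * gap s k = h * 'C(n, 3).
Proof.
move=> gapE; rewrite -bin_sum big_distrr /=; apply: eq_big_nat => j /andP[_ jn].
rewrite -bin2_sum big_distrr /=; apply: eq_big_nat => -[|k] /andP[_ kj].
  by rewrite muln0.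
by rewrite mulnC gapE //; lia.
Qed.

Lemma wiener_spiro n s : 0 < n -> spiro_choice n s ->
  wiener (spiro_adj n s) =
  27 * n + 90 * 'C(n, 2) + 25 * \sum_(0 <= j < n) \sum_(0 <= k < j) k * gap s k.
Proof. by move=> n_gt0 s_spiro; rewrite wiener_dist_sum // dist_sumE. Qed.

Lemma wiener_spiro_const n s h : 0 < n -> spiro_choice n s ->
  (forall k, 1 <= k -> k.+2 <= n -> gap s k = h) ->
  wiener (spiro_adj n s) = 27 * n + 90 * 'C(n, 2) + 25 * h * 'C(n, 3).
Proof. by move=> n_gt0 s_spiro gapE; rewrite wiener_spiro // (sum_gap_const gapE) mulnA. Qed.

Lemma mirror_choice_spiro n s a : 0 < a <= 5 ->
  (forall k, 1 <= k -> k.+2 <= n -> s k = a \/ s k = 6 - a) ->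
  spiro_choice n s /\ forall k, 1 <= k -> k.+2 <= n -> gap s k = hexdist 0 a.
Proof.
move=> a_range sE; have s_spiro : spiro_choice n s by move=> k k1 kn; case: (sE k k1 kn) => ->; lia.
split=> // k k1 kn; rewrite /gap (cutpos_spiro s_spiro) //.
by case: (sE k k1 kn) => ->; case: a a_range {sE} => [|[|[|[|[|[|]]]]]].
Qed.

Local Open Scope ring_scope.

Lemma natr_bin2 (F : numFieldType) n : 'C(n, 2)%:R = n%:R * (n%:R - 1) / 2 :> F.
Proof.
elim: n => [|n IH]; first by rewrite mul0r mul0r.
by rewrite binS bin1 natrD IH -natr1; field.
Qed.

Lemma natr_bin3 (F : numFieldType) n : 'C(n, 3)%:R = n%:R * (n%:R - 1) * (n%:R - 2) / 6 :> F.
Proof.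
elim: n => [|n IH]; first by rewrite !mul0r.
by rewrite binS natrD IH natr_bin2 -natr1; field.
Qed.

Theorem corollary2p3 (n : nat) (s_o s_m s_p : nat -> nat) :
  (0 < n)%N ->
  ortho_choice n s_o -> meta_choice n s_m -> para_choice n s_p ->
  [/\ (wiener (spiro_adj n s_o))%:R
        = 25 / 6 * n%:R ^+ 3 + 65 / 2 * n%:R ^+ 2 - 29 / 3 * n%:R :> rat,
      (wiener (spiro_adj n s_m))%:R
        = 25 / 3 * n%:R ^+ 3 + 20 * n%:R ^+ 2 - 4 / 3 * n%:R :> rat
    & (wiener (spiro_adj n s_p))%:R
        = 25 / 2 * n%:R ^+ 3 + 15 / 2 * n%:R ^+ 2 + 7 * n%:R :> rat].
Proof.
move=> n_gt0 ortho meta para.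
have [o_spiro o_gap] := @mirror_choice_spiro n s_o 1 isT ortho.
have [m_spiro m_gap] := @mirror_choice_spiro n s_m 2 isT meta.
have [p_spiro p_gap] := @mirror_choice_spiro n s_p 3 isT (fun k k1 kn => or_introl (para k k1 kn)).
rewrite (wiener_spiro_const (h := 1) n_gt0 o_spiro o_gap).
rewrite (wiener_spiro_const (h := 2) n_gt0 m_spiro m_gap).
rewrite (wiener_spiro_const (h := 3) n_gt0 p_spiro p_gap).
by split; rewrite 2!natrD !natrM natr_bin2 natr_bin3; field.
Qed.
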